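(* Let $E,F$ be Lebesgue-measurable subsets of $[-\infty,\infty]$, and let $m:F\to E$ be a surjective, measure-preserving, order-preserving (nondecreasing) map. Then there is a Lebesgue-null set $F_0\subseteq F$ such that $m$ restricted to $F\setminus F_0$ is a bijection onto $E$.
   Context: Lebesgue measure $\lambda$ on $[-\infty,\infty]$ gives $\{\pm\infty\}$ measure zero. A map $m:F\to E$ is measure-preserving if for every measurable $A\subseteq E$, $m^{-1}(A)$ is measurable with $\lambda(m^{-1}(A))=\lambda(A)$. *)

From Stdlib Require Import Reals Classical ClassicalEpsilon.
Open Scope R_scope.

Inductive xR : Type := Fin (x : R) | PInf | MInf.

Definition xle (a b : xR) : Prop :=
  match a, b with
  | MInf, _ => True
  | _, PInf => True
  | Fin x, Fin y => x <= y
  | _, _ => False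
  end.

(* addition, used only on values in [0, +oo] *)
Definition xplus (a b : xR) : xR :=
  match a, b with
  | PInf, _ | _, PInf => PInf
  | MInf, _ | _, MInf => MInf
  | Fin x, Fin y => Fin (x + y)
  end.

Definition series_val (u : nat -> R) (v : xR) : Prop :=
  match v with
  | Fin l => Un_cv (fun n => sum_f_R0 u n) l
  | PInf => cv_infty (fun n => sum_f_R0 u n)
  | MInf => False
  end.

Definition cover_costs (A : R -> Prop) (c : xR) : Prop :=
  exists a b : nat -> R,
    (forall n, a n <= b n) /\
    (forall x, A x -> exists n, a n < x < b n) /\
    series_val (fun n => b n - a n) c.

Definition is_glb (S : xR -> Prop) (v : xR) : Prop :=
  (forall c, S c -> xle v c) /\
  (forall w, (forall c, S c -> xle w c) -> xle w v).

Definition lam_outer (A : R -> Prop) : xR :=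
  epsilon (inhabits PInf) (fun v => is_glb (cover_costs A) v).

Definition leb_measurable (A : R -> Prop) : Prop :=
  forall T : R -> Prop,
    lam_outer T = xplus (lam_outer (fun x => T x /\ A x))
                        (lam_outer (fun x => T x /\ ~ A x)).

(* Subsets of [-oo,+oo]: only the finite part matters;
   {+oo}, {-oo} are null (hence measurable). *)
Definition fin_part (A : xR -> Prop) : R -> Prop := fun x => A (Fin x).

Definition xmeasurable (A : xR -> Prop) : Prop := leb_measurable (fin_part A).

Definition lam (A : xR -> Prop) : xR := lam_outer (fin_part A).

Definition measure_preserving (F E : xR -> Prop) (m : xR -> xR) : Prop :=
  forall A : xR -> Prop,
    (forall y, A y -> E y) -> xmeasurable A ->
    xmeasurable (fun x => F x /\ A (m x)) /\
    lam (fun x => F x /\ A (m x)) = lam A.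

(* Call a
   value y a multiple value if it has two distinct preimages x1 < x2.  By
   monotonicity the whole interval (x1, x2) of F is sent to y, so it contains a
   rational r that determines y uniquely; hence the (finite) multiple values form
   a countable set, and countable sets are Lebesgue-null.  Null sets are
   Caratheodory measurable, so measure preservation shows that their preimage
   under m is null as well.  Discarding from that preimage one chosen
   representative per fibre leaves a null set F0 outside of which m is a
   bijection onto E. *)

From Stdlib Require Import Reals Classical ClassicalEpsilon Cantor Lia Lra ZArith.
Open Scope R_scope.

Lemma xle_trans a b c : xle a b -> xle b c -> xle a c.
Proof. destruct a, b, c; simpl; auto; try tauto; lra. Qed.

Lemma xle_antisym a b : xle a b -> xle b a -> a = b.
Proof. destruct a, b; simpl; try tauto; intros; f_equal; lra. Qed.

Lemma xle_total a b : xle a b \/ xle b a.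
Proof. destruct a, b; simpl; auto; lra. Qed.

Definition xlt (a b : xR) : Prop := xle a b /\ a <> b.

Lemma xlt_fin a b : xlt (Fin a) (Fin b) <-> a < b.
Proof.
  unfold xlt; simpl; split.
  - intros [[h | h] hne]; [exact h | subst; tauto].
  - intros h; split; [lra | intro e; injection e; lra].
Qed.

Lemma xle_fin_approx u w :
  (forall eps, 0 < eps -> xle u (Fin (w + eps))) -> xle u (Fin w).
Proof.
  intros H. destruct u as [r | |]; simpl; auto.
  - destruct (Rle_or_lt r w) as [h | h]; auto.
    specialize (H ((r - w) / 2) ltac:(lra)). simpl in H. lra.
  - apply (H 1). lra.
Qed.

(* An enumeration of the rationals: k codes a triple (i, j, n) and denotes
   (i - j) / (n + 1). *)
Definition rat_enum (k : nat) : R :=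
  let (i, k2) := of_nat k in let (j, n) := of_nat k2 in (INR i - INR j) / INR (S n).

Lemma IZR_as_INR_diff (z : Z) : exists i j : nat, IZR z = INR i - INR j.
Proof.
  destruct z as [|p|p].
  - exists 0%nat, 0%nat. simpl. lra.
  - exists (Pos.to_nat p), 0%nat. rewrite (INR_IZR_INZ (Pos.to_nat p)), positive_nat_Z. simpl. lra.
  - exists 0%nat, (Pos.to_nat p). rewrite (INR_IZR_INZ (Pos.to_nat p)), positive_nat_Z.
    rewrite <- Pos2Z.opp_pos, opp_IZR. simpl. lra.
Qed.

(* The enumerated rationals are dense in R: with s = n + 1 > 1 / (b - a), the
   fraction up(a s) / s lies in (a, b). *)
Lemma rat_enum_dense a b : a < b -> exists k, a < rat_enum k < b.
Proof.
  intros Hab.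
  set (n := Z.to_nat (up (/ (b - a)))).
  assert (Hs : / (b - a) < INR (S n)).
  { destruct (archimed (/ (b - a))) as [Hu _].
    rewrite S_INR. unfold n.
    destruct (Z_le_gt_dec 0 (up (/ (b - a)))) as [h | h].
    - rewrite INR_IZR_INZ, Z2Nat.id; auto. lra.
    - assert (IZR (up (/ (b - a))) <= 0) by (apply IZR_le; lia).
      pose proof (pos_INR (Z.to_nat (up (/ (b - a))))). lra. }
  set (s := INR (S n)) in *.
  assert (Hs0 : 0 < s) by (apply lt_0_INR; lia).
  assert (Hsb : s * (b - a) > 1).
  { assert (0 < / (b - a)) by (apply Rinv_0_lt_compat; lra).
    replace 1 with (/ (b - a) * (b - a)) by (field; lra).
    apply Rmult_lt_compat_r; lra. }
  destruct (archimed (a * s)) as [Hz1 Hz2].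
  destruct (IZR_as_INR_diff (up (a * s))) as [i [j Hij]].
  exists (to_nat (i, to_nat (j, n))). unfold rat_enum. rewrite !cancel_of_to. fold s.
  rewrite <- Hij.
  assert (Hq : IZR (up (a * s)) / s * s = IZR (up (a * s))) by (field; lra).
  set (q := IZR (up (a * s)) / s) in *.
  split; nra.
Qed.

Lemma rat_enum_dense_xR p1 p2 :
  xlt p1 p2 -> exists k, xlt p1 (Fin (rat_enum k)) /\ xlt (Fin (rat_enum k)) p2.
Proof.
  intros [H1 H2].
  assert (G : forall a b, a < b ->
            (forall r, a < r < b -> xlt p1 (Fin r) /\ xlt (Fin r) p2) ->
            exists k, xlt p1 (Fin (rat_enum k)) /\ xlt (Fin (rat_enum k)) p2).
  { intros a b hab hr. destruct (rat_enum_dense a b hab) as [k hk]. exists k. auto. }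
  destruct p1 as [a| |], p2 as [b| |]; simpl in H1; try tauto.
  - apply (G a b).
    + destruct H1; [auto | subst; tauto].
    + intros r hr. rewrite !xlt_fin. lra.
  - apply (G a (a + 1)); [lra |]. intros r hr. rewrite xlt_fin.
    split; [lra | split; [exact I | discriminate]].
  - apply (G (b - 1) b); [lra |]. intros r hr. rewrite xlt_fin.
    split; [split; [exact I | discriminate] | lra].
  - apply (G 0 1); [lra |]. intros r hr.
    split; split; solve [exact I | discriminate].
Qed.

(** Outer measure *)

Lemma sum_nonneg u N : (forall n, 0 <= u n) -> 0 <= sum_f_R0 u N.
Proof. intros Hu. induction N; simpl; [apply Hu |]. specialize (Hu (S N)). lra. Qed.

Lemma cover_costs_nonneg A c : cover_costs A c -> xle (Fin 0) c.
Proof.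
  intros (a & b & Hab & _ & Hs). destruct c as [l | |]; simpl in *; auto.
  destruct (Rle_or_lt 0 l) as [h | h]; auto.
  destruct (Hs (- l)) as [N HN]; [lra |].
  specialize (HN N (le_n _)). unfold Rdist in HN. apply Rabs_def2 in HN.
  assert (0 <= sum_f_R0 (fun n => b n - a n) N).
  { apply sum_nonneg. intro n. specialize (Hab n). lra. }
  lra.
Qed.

Lemma cover_costs_sub (A B : R -> Prop) c :
  (forall x, A x -> B x) -> cover_costs B c -> cover_costs A c.
Proof. intros H (a & b & H1 & H2 & H3). exists a, b. auto. Qed.

(* Every family of nonnegative extended reals has a greatest lower bound;
   this makes the choice in the definition of lam_outer meaningful. *)
Lemma glb_exists (S : xR -> Prop) :
  (forall c, S c -> xle (Fin 0) c) -> exists v, is_glb S v.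
Proof.
  intros Hpos.
  destruct (classic (exists l, S (Fin l))) as [[l Hl] | Hn].
  - destruct (completeness (fun x => S (Fin (- x)))) as [g [Hg1 Hg2]].
    + exists 0. intros x Hx. specialize (Hpos _ Hx). simpl in Hpos. lra.
    + exists (- l). rewrite Ropp_involutive. exact Hl.
    + exists (Fin (- g)). split.
      * intros c Hc. destruct c; simpl; auto.
        -- assert (- x <= g) by (apply Hg1; rewrite Ropp_involutive; auto). lra.
        -- apply Hpos in Hc. simpl in Hc. tauto.
      * intros w Hw. destruct w; simpl; auto.
        -- assert (g <= - x); [| lra]. apply Hg2. intros y Hy.
           specialize (Hw _ Hy). simpl in Hw. lra.
        -- specialize (Hw _ Hl). simpl in Hw. tauto.
  - exists PInf. split.
    + intros c Hc. destruct c; simpl; auto.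
      * exfalso. apply Hn. eauto.
      * apply Hpos in Hc. simpl in Hc. tauto.
    + intros w _. destruct w; simpl; auto.
Qed.

Lemma lam_outer_glb A : is_glb (cover_costs A) (lam_outer A).
Proof. unfold lam_outer. apply epsilon_spec, glb_exists, cover_costs_nonneg. Qed.

Lemma lam_outer_le_cost A c : cover_costs A c -> xle (lam_outer A) c.
Proof. apply (proj1 (lam_outer_glb A)). Qed.

Lemma lam_outer_nonneg A : xle (Fin 0) (lam_outer A).
Proof. apply (proj2 (lam_outer_glb A)). apply cover_costs_nonneg. Qed.

Lemma lam_outer_mono (A B : R -> Prop) :
  (forall x, A x -> B x) -> xle (lam_outer A) (lam_outer B).
Proof.
  intros H. apply (proj2 (lam_outer_glb B)). intros c Hc.
  apply lam_outer_le_cost. exact (cover_costs_sub A B c H Hc).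
Qed.

Lemma lam_outer_approx A w eps :
  lam_outer A = Fin w -> 0 < eps -> exists l, l <= w + eps /\ cover_costs A (Fin l).
Proof.
  intros Hw He. apply NNPP. intro Hn.
  assert (Hlb : forall c, cover_costs A c -> xle (Fin (w + eps)) c).
  { intros c Hc. destruct c as [x | |]; simpl; auto.
    - destruct (Rle_or_lt (w + eps) x); auto.
      exfalso. apply Hn. exists x. split; [lra | auto].
    - apply cover_costs_nonneg in Hc. simpl in Hc. tauto. }
  pose proof (proj2 (lam_outer_glb A) _ Hlb) as H. rewrite Hw in H. simpl in H. lra.
Qed.

Definition interleave (d1 d2 : nat -> R) (n : nat) : R :=
  if Nat.even n then d1 (Nat.div2 n) else d2 (Nat.div2 n).

Lemma interleave_even d1 d2 n : interleave d1 d2 (2 * n) = d1 n.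
Proof. unfold interleave. rewrite Nat.even_even, Nat.div2_double. reflexivity. Qed.

Lemma interleave_odd d1 d2 n : interleave d1 d2 (S (2 * n)) = d2 n.
Proof.
  unfold interleave.
  rewrite Nat.even_succ, <- Nat.negb_even, Nat.even_even, Nat.div2_succ_double.
  reflexivity.
Qed.

Lemma interleave_sum d1 d2 n :
  sum_f_R0 (interleave d1 d2) (S (2 * n)) = sum_f_R0 d1 n + sum_f_R0 d2 n /\
  sum_f_R0 (interleave d1 d2) (2 * S n) = sum_f_R0 d1 (S n) + sum_f_R0 d2 n.
Proof.
  induction n as [| n [IH1 IH2]].
  - pose proof (interleave_even d1 d2 0). pose proof (interleave_odd d1 d2 0).
    pose proof (interleave_even d1 d2 1). simpl in *. split; lra.
  - split.
    + rewrite tech5, IH2, interleave_odd, (tech5 d2 n). lra.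
    + replace (2 * S (S n))%nat with (S (S (2 * S n))) by lia.
      rewrite tech5, tech5, IH2, interleave_odd.
      replace (S (S (2 * S n))) with (2 * S (S n))%nat by lia.
      rewrite interleave_even, (tech5 d1 (S n)), (tech5 d2 n). lra.
Qed.

Lemma interleave_cv d1 d2 l1 l2 :
  Un_cv (sum_f_R0 d1) l1 -> Un_cv (sum_f_R0 d2) l2 ->
  Un_cv (sum_f_R0 (interleave d1 d2)) (l1 + l2).
Proof.
  intros H1 H2 eps He.
  destruct (H1 (eps / 2)) as [N1 HN1]; [lra |].
  destruct (H2 (eps / 2)) as [N2 HN2]; [lra |].
  exists (S (2 * Nat.max N1 N2)). intros k Hk.
  destruct (Nat.Even_or_Odd k) as [[n Hn] | [n Hn]]; subst k.
  - destruct n as [| n]; [lia |]. rewrite (proj2 (interleave_sum d1 d2 n)).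
    specialize (HN1 (S n) ltac:(lia)). specialize (HN2 n ltac:(lia)).
    unfold Rdist in *. apply Rabs_def2 in HN1, HN2. apply Rabs_def1; lra.
  - replace (2 * n + 1)%nat with (S (2 * n)) by lia.
    rewrite (proj1 (interleave_sum d1 d2 n)).
    specialize (HN1 n ltac:(lia)). specialize (HN2 n ltac:(lia)).
    unfold Rdist in *. apply Rabs_def2 in HN1, HN2. apply Rabs_def1; lra.
Qed.

Lemma cover_costs_union (A B : R -> Prop) l1 l2 :
  cover_costs A (Fin l1) -> cover_costs B (Fin l2) ->
  cover_costs (fun x => A x \/ B x) (Fin (l1 + l2)).
Proof.
  intros (a1 & b1 & H1 & C1 & S1) (a2 & b2 & H2 & C2 & S2).
  exists (interleave a1 a2), (interleave b1 b2). split; [| split].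
  - intro n. unfold interleave. destruct (Nat.even n); auto.
  - intros x [Hx | Hx].
    + destruct (C1 x Hx) as [n Hn]. exists (2 * n)%nat. rewrite !interleave_even. auto.
    + destruct (C2 x Hx) as [n Hn]. exists (S (2 * n)). rewrite !interleave_odd. auto.
  - simpl in *. refine (Un_cv_ext _ _ _ _ (interleave_cv _ _ _ _ S1 S2)).
    intro n. apply sum_eq. intros i _. unfold interleave. destruct (Nat.even i); auto.
Qed.

(** Negligible sets *)

Definition negligible (N : R -> Prop) : Prop :=
  forall eps, 0 < eps -> cover_costs N (Fin eps).

Lemma negligible_sub (A N : R -> Prop) :
  (forall x, A x -> N x) -> negligible N -> negligible A.
Proof. intros H HN eps He. exact (cover_costs_sub A N _ H (HN eps He)). Qed.

Lemma negligible_lam_outer N : negligible N -> lam_outer N = Fin 0.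
Proof.
  intros HN. apply xle_antisym; [| apply lam_outer_nonneg].
  replace 0 with (0 + 0) by lra. apply xle_fin_approx. intros eps He.
  replace (0 + 0 + eps) with eps by lra. exact (lam_outer_le_cost _ _ (HN eps He)).
Qed.

Lemma lam_outer_diff_negligible (N T : R -> Prop) :
  negligible N -> lam_outer (fun x => T x /\ ~ N x) = lam_outer T.
Proof.
  intros HN. apply xle_antisym; [apply lam_outer_mono; tauto |].
  destruct (lam_outer (fun x => T x /\ ~ N x)) as [w| |] eqn:Ew.
  - apply xle_fin_approx. intros eps He.
    destruct (lam_outer_approx _ w (eps / 2) Ew ltac:(lra)) as [l [Hl C]].
    assert (Hcov : cover_costs T (Fin (l + eps / 2))).
    { refine (cover_costs_sub _ _ _ _ (cover_costs_union _ _ _ _ C (HN (eps / 2) ltac:(lra)))).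
      intros x Hx. destruct (classic (N x)); tauto. }
    eapply xle_trans; [exact (lam_outer_le_cost _ _ Hcov) | simpl; lra].
  - destruct (lam_outer T); simpl; auto.
  - pose proof (lam_outer_nonneg (fun x => T x /\ ~ N x)) as H.
    rewrite Ew in H. destruct H.
Qed.

Lemma negligible_measurable N : negligible N -> leb_measurable N.
Proof.
  intros HN T.
  rewrite (negligible_lam_outer (fun x => T x /\ N x))
    by (apply (negligible_sub _ N); tauto).
  rewrite (lam_outer_diff_negligible N T HN).
  pose proof (lam_outer_nonneg T) as Hv.
  destruct (lam_outer T); simpl in *; try tauto. f_equal. lra.
Qed.

Lemma geometric_series_cv eps : Un_cv (sum_f_R0 (fun k => eps / 2 * (/ 2) ^ k)) eps.
Proof.
  pose proof (GP_infinite (/ 2) ltac:(rewrite Rabs_pos_eq; lra)) as H.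
  unfold Pser, infinite_sum in H.
  assert (Hc : Un_cv (fun _ => eps / 2) (eps / 2)).
  { intros e He. exists 0%nat. intros. unfold Rdist. rewrite Rminus_diag, Rabs_R0. auto. }
  pose proof (CV_mult _ _ _ _ Hc H) as Hprod.
  replace (eps / 2 * / (1 - / 2)) with eps in Hprod by field.
  refine (Un_cv_ext _ _ _ _ Hprod).
  intro n. simpl. rewrite scal_sum. apply sum_eq. intros. lra.
Qed.

(* Countable sets are negligible: cover the k-th point by an interval of
   length eps / 2^(k+1). *)
Lemma negligible_countable (A : R -> Prop) (c : nat -> R) :
  (forall x, A x -> exists k, x = c k) -> negligible A.
Proof.
  intros HA eps He.
  set (h := fun k => eps / 4 * (/ 2) ^ k).
  assert (Hh : forall k, 0 < h k).
  { intro k. unfold h. apply Rmult_lt_0_compat; [lra | apply pow_lt; lra]. }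
  exists (fun k => c k - h k), (fun k => c k + h k). split; [| split].
  - intro n. specialize (Hh n). lra.
  - intros x Hx. destruct (HA x Hx) as [k ->]. exists k. specialize (Hh k). lra.
  - simpl. refine (Un_cv_ext _ _ _ _ (geometric_series_cv eps)).
    intro n. apply sum_eq. intros i _. unfold h. lra.
Qed.

(** Multiple values of a monotone map form a countable set *)

Section MonotoneFibres.

Variables (F : xR -> Prop) (m : xR -> xR).
Hypothesis m_mono : forall x y, F x -> F y -> xle x y -> xle (m x) (m y).

Definition multiple_value (y : xR) : Prop :=
  exists x1 x2, F x1 /\ F x2 /\ m x1 = y /\ m x2 = y /\ x1 <> x2.

Definition straddles (y r : xR) : Prop :=
  exists p1 p2, F p1 /\ F p2 /\ m p1 = y /\ m p2 = y /\ xlt p1 r /\ xlt r p2.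

Lemma straddles_unique y y' r : straddles y r -> straddles y' r -> y = y'.
Proof.
  intros (p1 & p2 & F1 & F2 & <- & E2 & L1 & L2) (q1 & q2 & G1 & G2 & D1 & <- & K1 & K2).
  apply xle_antisym.
  - apply m_mono; auto. eapply xle_trans; [apply L1 | apply K2].
  - rewrite <- E2, <- D1. apply m_mono; auto. eapply xle_trans; [apply K1 | apply L2].
Qed.

Lemma multiple_value_straddles y :
  multiple_value y -> exists k, straddles y (Fin (rat_enum k)).
Proof.
  intros (x1 & x2 & F1 & F2 & E1 & E2 & N).
  destruct (xle_total x1 x2) as [h | h].
  - destruct (rat_enum_dense_xR x1 x2 (conj h N)) as [k [h1 h2]].
    exists k, x1, x2. tauto.
  - destruct (rat_enum_dense_xR x2 x1 (conj h (not_eq_sym N))) as [k [h1 h2]].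
    exists k, x2, x1. tauto.
Qed.

(* The finite multiple values are enumerated by the value straddled by the
   k-th rational. *)
Lemma multiple_values_countable :
  exists c : nat -> R, forall w, multiple_value (Fin w) -> exists k, w = c k.
Proof.
  exists (fun k => epsilon (inhabits 0) (fun w => straddles (Fin w) (Fin (rat_enum k)))).
  intros w Hw. destruct (multiple_value_straddles _ Hw) as [k Hk]. exists k.
  assert (Hc : straddles (Fin (epsilon (inhabits 0)
                 (fun w => straddles (Fin w) (Fin (rat_enum k))))) (Fin (rat_enum k)))
    by (apply epsilon_spec; eauto).
  pose proof (straddles_unique _ _ _ Hk Hc) as e. injection e. auto.
Qed.

Lemma multiple_values_negligible : negligible (fin_part multiple_value).
Proof.
  destruct multiple_values_countable as [c Hc]. exact (negligible_countable _ c Hc).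
Qed.

End MonotoneFibres.

Lemma fibre_representatives (E F A : xR -> Prop) (m : xR -> xR) :
  (forall y, E y -> exists x, F x /\ m x = y) ->
  (forall x1 x2, F x1 -> F x2 -> m x1 = m x2 -> x1 <> x2 -> A (m x1)) ->
  exists F0 : xR -> Prop,
    (forall x, F0 x -> F x /\ A (m x)) /\
    (forall y, E y -> exists x, (F x /\ ~ F0 x) /\ m x = y /\
        (forall x', F x' -> ~ F0 x' -> m x' = y -> x' = x)).
Proof.
  intros Hsurj HA.
  set (rep := fun y => epsilon (inhabits PInf) (fun x => F x /\ m x = y)).
  exists (fun x => F x /\ A (m x) /\ x <> rep (m x)). split; [tauto |].
  intros y Hy.
  assert (Hr : F (rep y) /\ m (rep y) = y) by (apply epsilon_spec; auto).
  destruct Hr as [Fr Er].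
  exists (rep y). split; [| split; [exact Er |]].
  - split; [exact Fr |]. intros (_ & _ & N). apply N. rewrite Er. reflexivity.
  - intros x' Fx' Nx' Ex'. apply NNPP. intro Hne. apply Nx'.
    split; [exact Fx' |]. rewrite Ex'. split; [| exact Hne].
    rewrite <- Ex'. apply (HA x' (rep y)); [exact Fx' | exact Fr | congruence | exact Hne].
Qed.

Theorem mainTheorem13 (E F : xR -> Prop) (m : xR -> xR) :
  xmeasurable E -> xmeasurable F ->
  (forall x, F x -> E (m x)) ->
  (forall y, E y -> exists x, F x /\ m x = y) ->
  measure_preserving F E m ->
  (forall x y, F x -> F y -> xle x y -> xle (m x) (m y)) ->
  exists F0 : xR -> Prop,
    (forall x, F0 x -> F x) /\ lam F0 = Fin 0 /\
    (forall y, E y -> exists x, (F x /\ ~ F0 x) /\ m x = y /\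
        (forall x', F x' -> ~ F0 x' -> m x' = y -> x' = x)).
Proof.
  intros _ _ HFE Hsurj Hmp Hmono.
  set (A := multiple_value F m).
  assert (HAE : forall y, A y -> E y) by (intros y (x & _ & Fx & _ & <- & _); auto).
  assert (HA0 : negligible (fin_part A)) by exact (multiple_values_negligible F m Hmono).
  (* measure preservation: the preimage of the null set A is null *)
  destruct (Hmp A HAE (negligible_measurable _ HA0)) as [_ Hpre].
  unfold lam in Hpre. rewrite (negligible_lam_outer _ HA0) in Hpre.
  destruct (fibre_representatives E F A m Hsurj) as (F0 & HF0 & Hbij).
  { intros x1 x2 F1 F2 Em N. exists x1, x2. auto. }
  exists F0. split; [| split; [| exact Hbij]].
  - intros x Hx. exact (proj1 (HF0 x Hx)).
  - apply xle_antisym; [| apply lam_outer_nonneg].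
    rewrite <- Hpre. apply lam_outer_mono. intros x Hx. exact (HF0 (Fin x) Hx).
Qed.
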